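(* If $L$ is a finitely generated group with subexponential growth and $Q$ is a finitely generated group with finite asymptotic dimension, then the wreath product $L \wr Q = \bigoplus L \rtimes Q$ satisfies \[ \operatorname{asdim}_{\mathrm{se}}(L\wr Q) \leq \operatorname{asdim}(Q). \]
   Context: Groups carry word metrics. $\operatorname{asdim}$ is the usual asymptotic dimension. $\operatorname{asdim}_{\mathrm{se}}(G)$ is the least $d$ such that for every $r\geq 0$, $G=X_0\cup\dots\cup X_d$ with each $X_i$ a disjoint union of pieces pairwise at distance at least $r$, and the pieces (with the induced metric) have uniformly subexponential growth: there is a subexponential non-decreasing $V$ and $C$ with every ball of radius $\rho$ in every piece of cardinality at most $CV(C\rho)+C$. *)

From Stdlib Require Import Reals List Lra.
Open Scope R_scope.

Record GroupOps := {
  gcar :> Type;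
  gmul : gcar -> gcar -> gcar;
  gone : gcar;
  ginv : gcar -> gcar }.
Arguments gmul {g}. Arguments gone {g}. Arguments ginv {g}.

Definition is_group (G : GroupOps) : Prop :=
  (forall x y z : G, gmul x (gmul y z) = gmul (gmul x y) z) /\
  (forall x : G, gmul gone x = x) /\ (forall x : G, gmul x gone = x) /\
  (forall x : G, gmul (ginv x) x = gone) /\ (forall x : G, gmul x (ginv x) = gone).

Record Group := { gops :> GroupOps; gaxioms : is_group gops }.

Definition is_letter {G : GroupOps} (S : list G) (x : G) : Prop :=
  exists s, In s S /\ (x = s \/ x = ginv s).

Definition prod_list {G : GroupOps} (w : list G) : G := fold_right gmul gone w.

Definition generates {G : GroupOps} (S : list G) : Prop :=
  forall g : G, exists w, Forall (is_letter S) w /\ prod_list w = g.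

Definition word_dist_le {G : GroupOps} (S : list G) (x y : G) (n : nat) : Prop :=
  exists w : list G, (length w <= n)%nat /\ Forall (is_letter S) w /\
                     gmul x (prod_list w) = y.

Definition dist_leR {G : GroupOps} (S : list G) (x y : G) (rho : R) : Prop :=
  exists n, word_dist_le S x y n /\ INR n <= rho.

Definition dist_geR {G : GroupOps} (S : list G) (x y : G) (r : R) : Prop :=
  forall n, word_dist_le S x y n -> r <= INR n.

Definition card_le {T : Type} (P : T -> Prop) (k : R) : Prop :=
  exists l : list T, INR (length l) <= k /\ forall y, P y -> In y l.

Definition subexponential (V : R -> R) : Prop :=
  forall eps, 0 < eps -> exists T, forall t, T <= t -> V t <= exp (eps * t).

Definition nondecreasing (V : R -> R) : Prop := forall s t, s <= t -> V s <= V t.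

Definition subexp_growth {G : GroupOps} (S : list G) : Prop :=
  forall eps, 0 < eps -> exists N : nat, forall n : nat, (N <= n)%nat ->
    card_le (fun y => word_dist_le S gone y n) (exp (eps * INR n)).

Definition r_disjoint {G : GroupOps} (S : list G) {J : Type} (P : J -> G -> Prop)
  (r : R) : Prop :=
  forall j j', j <> j' -> forall x y, P j x -> P j' y -> x <> y /\ dist_geR S x y r.

(* X_i = union_j P i j, i = 0..d, cover G *)
Definition covers {G : GroupOps} {J : Type} (P : nat -> J -> G -> Prop) (d : nat) : Prop :=
  forall g : G, exists i j, (i <= d)%nat /\ P i j g.

Definition asdim_le {G : GroupOps} (S : list G) (d : nat) : Prop :=
  forall r : R, 0 <= r ->
  exists (J : Type) (P : nat -> J -> G -> Prop),
    covers P d /\ (forall i, (i <= d)%nat -> r_disjoint S (P i) r) /\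
    exists D : nat, forall i j x y, (i <= d)%nat -> P i j x -> P i j y ->
                                    word_dist_le S x y D.

Definition asdim_se_le {G : GroupOps} (S : list G) (d : nat) : Prop :=
  forall r : R, 0 <= r ->
  exists (J : Type) (P : nat -> J -> G -> Prop),
    covers P d /\ (forall i, (i <= d)%nat -> r_disjoint S (P i) r) /\
    exists (V : R -> R) (C : R), subexponential V /\ nondecreasing V /\
      forall i j x rho, (i <= d)%nat -> P i j x -> 0 <= rho ->
        card_le (fun y => P i j y /\ dist_leR S x y rho) (C * V (C * rho) + C).

Definition fin_supp {Q L : GroupOps} (f : Q -> L) : Prop :=
  exists s : list Q, forall q, ~ In q s -> f q = gone.

Definition wr_car (L Q : GroupOps) : Type := ({f : Q -> L | fin_supp f} * Q)%type.

Lemma fin_supp_one (L Q : Group) : @fin_supp Q L (fun _ => gone).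
Proof. exists nil; auto. Qed.

Lemma fin_supp_mul (L Q : Group) (f g : Q -> L) (q : Q) :
  fin_supp f -> fin_supp g -> fin_supp (fun x => gmul (f x) (g (gmul (ginv q) x))).
Proof.
  destruct (gaxioms L) as [_ [HL1 _]].
  destruct (gaxioms Q) as [Qa [Q1 [_ [_ Qv]]]].
  intros [sf Hf] [sg Hg]. exists (sf ++ map (gmul q) sg). intros x Hx.
  rewrite Hf, Hg; [apply HL1| |].
  - intro H; apply Hx, in_or_app; right.
    replace x with (gmul q (gmul (ginv q) x)) by (rewrite Qa, Qv, Q1; reflexivity).
    apply in_map; exact H.
  - intro H; apply Hx, in_or_app; left; exact H.
Qed.

Lemma fin_supp_inv (L Q : Group) (f : Q -> L) (q : Q) :
  fin_supp f -> fin_supp (fun x => ginv (f (gmul q x))).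
Proof.
  destruct (gaxioms L) as [_ [HL1 [_ [HLv _]]]].
  destruct (gaxioms Q) as [Qa [Q1 [_ [Qv _]]]].
  intros [sf Hf]. exists (map (gmul (ginv q)) sf). intros x Hx.
  rewrite Hf.
  - rewrite <- (HLv gone) at 2. rewrite (proj1 (proj2 (proj2 (gaxioms L)))). reflexivity.
  - intro H; apply Hx.
    replace x with (gmul (ginv q) (gmul q x)) by (rewrite Qa, Qv, Q1; reflexivity).
    apply in_map; exact H.
Qed.

Definition wr_mul (L Q : Group) (a b : wr_car L Q) : wr_car L Q :=
  let '(exist _ f Hf, q) := a in
  let '(exist _ g Hg, q') := b in
  (exist _ (fun x => gmul (f x) (g (gmul (ginv q) x))) (fin_supp_mul L Q f g q Hf Hg),
   gmul q q').

Definition wr_one (L Q : Group) : wr_car L Q :=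
  (exist _ (fun _ => gone) (fin_supp_one L Q), gone).

Definition wr_inv (L Q : Group) (a : wr_car L Q) : wr_car L Q :=
  let '(exist _ f Hf, q) := a in
  (exist _ (fun x => ginv (f (gmul q x))) (fin_supp_inv L Q f q Hf), ginv q).

Definition wreath (L Q : Group) : GroupOps :=
  {| gcar := wr_car L Q; gmul := wr_mul L Q; gone := wr_one L Q; ginv := wr_inv L Q |}.

(* Every letter of S, and hence by subadditivity every element at S-distance
   at most m from 1, moves the cursor by at most B m in Q, changes only lamps
   within B m of the cursor, and changes each lamp by at most B m in L.
   Take an asdim decomposition of Q at scale B s (s >= r) into pieces of
   diameter at most D, and cut the set of elements of L wr Q whose cursor lies
   in a piece U according to their lamps away from the (B s)-neighbourhood of
   U.  Two such pieces are at S-distance at least s.  An element of a piece is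
   determined by its cursor, within D of that of a base point x, and by its
   lamps at the K = #B_Q(D + B s) positions near U; within distance rho of x
   each of these lamps ranges over a ball of radius B rho in L, so the piece
   has at most #B_Q(D) * #B_L(B rho)^K points there, and this is
   subexponential in rho. *)

From Stdlib Require Import Reals List Lra Lia ZArith Wf_nat.
From Stdlib Require Import Classical ClassicalEpsilon ProofIrrelevance FunctionalExtensionality.

Lemma uniform_nat_bound {T : Type} (Pr : T -> nat -> Prop) (l : list T) :
  (forall t n m, Pr t n -> (n <= m)%nat -> Pr t m) ->
  (forall t, In t l -> exists n, Pr t n) ->
  exists N, forall t, In t l -> Pr t N.
Proof.
  intros Hmono. induction l as [|a l IH]; intros Hl.
  - exists O; simpl; tauto.
  - destruct (Hl a (or_introl eq_refl)) as [na Ha].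
    destruct IH as [N HN]; [intros t Ht; apply Hl; simpl; auto|].
    exists (Nat.max na N). intros t [<- | Ht]; eapply Hmono; eauto; lia.
Qed.

Fixpoint list_choices {A : Type} (ls : list (list A)) : list (list A) :=
  match ls with
  | nil => nil :: nil
  | l :: ls => flat_map (fun a => map (cons a) (list_choices ls)) l
  end.

Lemma In_list_choices {A B : Type} (f : B -> A) (g : B -> list A) (l : list B) :
  (forall b, In b l -> In (f b) (g b)) -> In (map f l) (list_choices (map g l)).
Proof.
  induction l as [|b l IH]; intros H; simpl; auto.
  apply in_flat_map. exists (f b); split; [apply H; simpl; auto|].
  apply in_map, IH. intros; apply H; simpl; auto.
Qed.

Lemma length_list_choices {A : Type} (ls : list (list A)) k :
  (forall l, In l ls -> length l = k) -> length (list_choices ls) = Nat.pow k (length ls).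
Proof.
  induction ls as [|l ls IH]; intros H; simpl; auto.
  assert (Hflat : forall l', length (flat_map (fun a => map (cons a) (list_choices ls)) l')
                             = (length l' * length (list_choices ls))%nat).
  { induction l' as [|a l' IH']; simpl; auto. rewrite length_app, length_map, IH'. lia. }
  rewrite Hflat, IH, (H l); simpl; auto. intros; apply H; simpl; auto.
Qed.

Lemma card_le_inj {T K : Type} (P : T -> Prop) (F : T -> K) (lk : list K) :
  inhabited T -> (forall y, P y -> In (F y) lk) ->
  (forall y z, P y -> P z -> F y = F z -> y = z) ->
  card_le P (INR (length lk)).
Proof.
  intros HT Hin Hinj.
  exists (map (fun k => epsilon HT (fun y => P y /\ F y = k)) lk).
  rewrite length_map. split; [lra|]. intros y Hy.
  apply in_map_iff. exists (F y). split; auto.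
  destruct (epsilon_spec HT (fun z => P z /\ F z = F y) (ex_intro _ y (conj Hy eq_refl))).
  apply Hinj; auto.
Qed.

Lemma card_le_weaken {T : Type} (P : T -> Prop) a b : card_le P a -> a <= b -> card_le P b.
Proof. intros [l [Hl Hc]] Hab. exists l; split; [lra | exact Hc]. Qed.

Definition ceilN (t : R) : nat := Z.to_nat (up t).

Lemma ceilN_mono s t : s <= t -> (ceilN s <= ceilN t)%nat.
Proof.
  intros H. unfold ceilN. destruct (archimed s), (archimed t).
  assert (up s <= up t)%Z; [|lia].
  apply Z.lt_succ_r, lt_IZR. rewrite succ_IZR. lra.
Qed.

Lemma ceilN_spec t : 0 <= t -> t <= INR (ceilN t) <= t + 1.
Proof.
  intros H. destruct (archimed t). unfold ceilN.
  assert (0 <= up t)%Z by (apply le_IZR; lra).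
  rewrite INR_IZR_INZ, Z2Nat.id by auto. lra.
Qed.

Lemma exp_le a b : a <= b -> exp a <= exp b.
Proof. intros [H | ->]; [left; apply exp_increasing; auto | lra]. Qed.

Lemma exp_pow a k : exp a ^ k = exp (INR k * a).
Proof.
  induction k as [|k IH]; [simpl; rewrite Rmult_0_l, exp_0; auto|].
  rewrite <- tech_pow_Rmult, IH, <- exp_plus, S_INR. f_equal. lra.
Qed.

Section WordMetric.
Context {G : GroupOps}.

Lemma word_dist_le_mono (S : list G) x y n m :
  word_dist_le S x y n -> (n <= m)%nat -> word_dist_le S x y m.
Proof. intros [w [Hl [Hw Hy]]] Hnm. exists w; repeat split; auto; lia. Qed.

Fixpoint words (alphabet : list G) (n : nat) : list (list G) :=
  match n with
  | O => nil :: nil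
  | S n => nil :: flat_map (fun a => map (cons a) (words alphabet n)) alphabet
  end.

Lemma In_words alphabet n w :
  (length w <= n)%nat -> Forall (fun a => In a alphabet) w -> In w (words alphabet n).
Proof.
  revert w; induction n as [|n IH]; intros w Hl Hw.
  - destruct w; simpl in *; [auto | lia].
  - destruct w as [|a w]; simpl; [auto|]. right. inversion Hw; subst.
    apply in_flat_map. exists a; split; auto.
    apply in_map, IH; simpl in *; auto; lia.
Qed.

Definition ball (S : list G) (n : nat) : list G :=
  map prod_list (words (S ++ map ginv S) n).

Lemma In_ball (S : list G) x y n :
  word_dist_le S x y n -> In y (map (gmul x) (ball S n)).
Proof.
  intros [w [Hl [Hw <-]]]. apply in_map, in_map, In_words; auto.
  eapply Forall_impl; [|exact Hw]. intros a [s [Hs [-> | ->]]]; apply in_or_app;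
    [left | right; apply in_map]; auto.
Qed.

Definition covers_ball (S : list G) (m : nat) (l : list G) : Prop :=
  forall y, word_dist_le S gone y m -> In y l.

Definition ball_card (S : list G) (m : nat) : nat :=
  epsilon (inhabits 0%nat) (fun k =>
    (exists l, length l = k /\ covers_ball S m l) /\
    forall l, covers_ball S m l -> (k <= length l)%nat).

Lemma ball_card_spec (S : list G) m :
  (exists l, length l = ball_card S m /\ covers_ball S m l) /\
  forall l, covers_ball S m l -> (ball_card S m <= length l)%nat.
Proof.
  unfold ball_card. apply epsilon_spec.
  destruct (dec_inh_nat_subset_has_unique_least_element
              (fun k => exists l, length l = k /\ covers_ball S m l))
    as [k [[Hk Hmin] _]].
  - intros k; apply classic.
  - exists (length (map (gmul gone) (ball S m))), (map (gmul gone) (ball S m)).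
    split; auto. intros y Hy; apply In_ball; exact Hy.
  - exists k; split; auto. intros l Hl; apply Hmin; eauto.
Qed.

Lemma ball_card_mono (S : list G) m m' :
  (m <= m')%nat -> (ball_card S m <= ball_card S m')%nat.
Proof.
  intros Hm. destruct (ball_card_spec S m') as [[l [<- Hl]] _].
  apply (ball_card_spec S m). intros y Hy; apply Hl; eapply word_dist_le_mono; eauto.
Qed.

Lemma ball_card_subexp (S : list G) : subexp_growth S ->
  forall eps, 0 < eps -> exists N : nat, forall m : nat, (N <= m)%nat ->
    INR (ball_card S m) <= exp (eps * INR m).
Proof.
  intros Hsub eps Heps. destruct (Hsub eps Heps) as [N HN]. exists N. intros m Hm.
  destruct (HN m Hm) as [l [Hl Hcov]].
  eapply Rle_trans; [apply le_INR, (ball_card_spec S m); exact Hcov | exact Hl].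
Qed.

Lemma r_disjoint_mono (S : list G) {J : Type} (P : J -> G -> Prop) r r' :
  r <= r' -> r_disjoint S P r' -> r_disjoint S P r.
Proof.
  intros Hr HP j j' Hj x y Hx Hy. destruct (HP j j' Hj x y Hx Hy) as [Hxy Hd].
  split; auto. intros n Hn. specialize (Hd n Hn). lra.
Qed.

End WordMetric.

Definition growth_bound {G : GroupOps} (S : list G) (B K : nat) (t : R) : R :=
  INR (ball_card S (B * ceilN t)) ^ K.

Lemma growth_bound_nonneg {G : GroupOps} (S : list G) B K t : 0 <= growth_bound S B K t.
Proof. apply pow_le, pos_INR. Qed.

Lemma growth_bound_nondecreasing {G : GroupOps} (S : list G) B K :
  nondecreasing (growth_bound S B K).
Proof.
  intros s t Hst. apply pow_incr. split; [apply pos_INR|].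
  apply le_INR, ball_card_mono, Nat.mul_le_mono_l, ceilN_mono; auto.
Qed.

Lemma growth_bound_subexponential {G : GroupOps} (S : list G) B K :
  (1 <= B)%nat -> subexp_growth S -> subexponential (growth_bound S B K).
Proof.
  intros HB Hsub eps Heps.
  set (c := INR K * INR B).
  assert (Hc : 0 <= c) by (apply Rmult_le_pos; apply pos_INR).
  set (e := eps / (2 * (c + 1))).
  assert (He : 0 < e) by (apply Rdiv_lt_0_compat; lra).
  assert (Heps_e : e * (2 * (c + 1)) = eps) by (unfold e; field; lra).
  destruct (ball_card_subexp S Hsub e He) as [N HN].
  exists (Rmax 1 (INR N)). intros t Ht.
  pose proof (Rmax_l 1 (INR N)). pose proof (Rmax_r 1 (INR N)).
  destruct (ceilN_spec t ltac:(lra)) as [Hu1 Hu2].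
  set (u := ceilN t) in *.
  assert (Hm : (u <= B * u)%nat) by nia.
  assert (HNm : (N <= B * u)%nat) by (apply INR_le; apply le_INR in Hm; lra).
  unfold growth_bound. fold u.
  eapply Rle_trans; [apply pow_incr; split; [apply pos_INR | exact (HN _ HNm)]|].
  rewrite exp_pow. apply exp_le. rewrite mult_INR.
  assert (Hbound : INR K * (e * (INR B * INR u)) = e * c * INR u) by (unfold c; ring).
  rewrite Hbound.
  assert (e * c * INR u <= e * c * (2 * t)) by (apply Rmult_le_compat_l; nra).
  nra.
Qed.

Section GroupFacts.
Context {G : Group}.

Lemma gmul_assoc (x y z : G) : gmul x (gmul y z) = gmul (gmul x y) z.
Proof. apply (gaxioms G). Qed.
Lemma gmul_1l (x : G) : gmul gone x = x.
Proof. apply (gaxioms G). Qed.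
Lemma gmul_1r (x : G) : gmul x gone = x.
Proof. apply (gaxioms G). Qed.
Lemma gmul_Vr (x : G) : gmul x (ginv x) = gone.
Proof. apply (gaxioms G). Qed.
Lemma gmul_KV (c x : G) : gmul c (gmul (ginv c) x) = x.
Proof. rewrite gmul_assoc, gmul_Vr, gmul_1l; reflexivity. Qed.

Lemma prod_list_app (w1 w2 : list G) :
  prod_list (w1 ++ w2) = gmul (prod_list w1) (prod_list w2).
Proof.
  induction w1 as [|a w1 IH]; simpl; [rewrite gmul_1l | rewrite IH, gmul_assoc]; reflexivity.
Qed.

Variable S : list G.

Lemma word_dist_le_refl (x : G) n : word_dist_le S x x n.
Proof. exists nil; repeat split; simpl; [lia | constructor | apply gmul_1r]. Qed.

Lemma word_dist_le_trans (x y z : G) a b :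
  word_dist_le S x y a -> word_dist_le S y z b -> word_dist_le S x z (a + b).
Proof.
  intros [w1 [Hl1 [Hw1 Hy]]] [w2 [Hl2 [Hw2 Hz]]]. exists (w1 ++ w2).
  rewrite length_app. repeat split; [lia | apply Forall_app; auto |].
  rewrite prod_list_app, gmul_assoc, Hy; exact Hz.
Qed.

Lemma word_dist_le_mul_l (c x y : G) n :
  word_dist_le S x y n -> word_dist_le S (gmul c x) (gmul c y) n.
Proof. intros [w [Hl [Hw Hy]]]. exists w; repeat split; auto. rewrite <- gmul_assoc, Hy; auto. Qed.

Lemma word_dist_le_from_1 (x z : G) n :
  word_dist_le S gone z n -> word_dist_le S x (gmul x z) n.
Proof. intros H. rewrite <- (gmul_1r x) at 1. apply word_dist_le_mul_l; exact H. Qed.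

Lemma word_dist_le_to_1 (x y : G) n :
  word_dist_le S x y n -> exists z, word_dist_le S gone z n /\ y = gmul x z.
Proof.
  intros [w [Hl [Hw Hy]]]. exists (prod_list w).
  split; auto. exists w; repeat split; auto. apply gmul_1l.
Qed.

Lemma generates_word_dist_le : generates S -> forall g : G, exists n, word_dist_le S gone g n.
Proof.
  intros HS g. destruct (HS g) as [w [Hw Hg]].
  exists (length w), w. repeat split; auto. rewrite gmul_1l; exact Hg.
Qed.

End GroupFacts.

Section Wreath.
Context {L Q : Group}.

Definition cursor (x : wreath L Q) : Q := snd x.
Definition lamp (x : wreath L Q) : Q -> L := proj1_sig (fst x).

Lemma cursor_mul (x y : wreath L Q) : cursor (gmul x y) = gmul (cursor x) (cursor y).
Proof. destruct x as [[f Hf] q], y as [[g Hg] q']; reflexivity. Qed.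

Lemma lamp_mul (x y : wreath L Q) p :
  lamp (gmul x y) p = gmul (lamp x p) (lamp y (gmul (ginv (cursor x)) p)).
Proof. destruct x as [[f Hf] q], y as [[g Hg] q']; reflexivity. Qed.

Lemma wreath_ext (y z : wreath L Q) :
  cursor y = cursor z -> (forall p, lamp y p = lamp z p) -> y = z.
Proof.
  destruct y as [[f Hf] q], z as [[g Hg] q']; unfold cursor, lamp; simpl. intros -> H.
  assert (f = g) as <- by (apply functional_extensionality; auto).
  rewrite (proof_irrelevance _ Hf Hg); reflexivity.
Qed.

Variables (SL : list L) (SQ : list Q).

Definition wr_size_le (a : wreath L Q) (B : nat) : Prop :=
  word_dist_le SQ gone (cursor a) B /\
  (forall p, lamp a p <> gone -> word_dist_le SQ gone p B) /\
  (forall p, word_dist_le SL gone (lamp a p) B).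

Lemma wr_size_le_mono a n m : wr_size_le a n -> (n <= m)%nat -> wr_size_le a m.
Proof.
  intros [Hc [Hs Hl]] Hnm.
  split; [|split]; intros; eapply word_dist_le_mono; eauto.
Qed.

Section Translation.
Variables (x z : wreath L Q) (K : nat).
Hypothesis Hz : wr_size_le z K.

Lemma cursor_mul_dist : word_dist_le SQ (cursor x) (cursor (gmul x z)) K.
Proof. rewrite cursor_mul. apply word_dist_le_from_1, (proj1 Hz). Qed.

Lemma lamp_mul_changed_near p :
  lamp (gmul x z) p <> lamp x p -> word_dist_le SQ (cursor x) p K.
Proof.
  rewrite lamp_mul. intros Hp.
  assert (Hzp : lamp z (gmul (ginv (cursor x)) p) <> gone).
  { intros E; apply Hp; rewrite E, gmul_1r; reflexivity. }
  rewrite <- (gmul_KV (cursor x) p). apply word_dist_le_from_1, (proj1 (proj2 Hz)), Hzp.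
Qed.

Lemma lamp_mul_dist p : word_dist_le SL (lamp x p) (lamp (gmul x z) p) K.
Proof. rewrite lamp_mul. apply word_dist_le_from_1, (proj2 (proj2 Hz)). Qed.

End Translation.

Lemma wr_size_le_1 : wr_size_le gone 0.
Proof.
  split; [|split]; [apply word_dist_le_refl | | intros; apply word_dist_le_refl].
  intros p Hp; exfalso; apply Hp; reflexivity.
Qed.

Lemma wr_size_le_mul a b A C :
  wr_size_le a A -> wr_size_le b C -> wr_size_le (gmul a b) (A + C).
Proof.
  intros Ha Hb. destruct Ha as [Hac [Has Hal]]. split; [|split].
  - eapply word_dist_le_trans; [exact Hac | apply cursor_mul_dist, Hb].
  - intros p Hp. destruct (classic (lamp a p = gone)) as [E | E].
    + eapply word_dist_le_trans; [exact Hac | apply (lamp_mul_changed_near a b C Hb)].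
      rewrite E; exact Hp.
    + eapply word_dist_le_mono; [apply Has, E | lia].
  - intros p. eapply word_dist_le_trans; [apply Hal | apply lamp_mul_dist, Hb].
Qed.

Lemma wr_size_le_exists : generates SL -> generates SQ -> forall a, exists B, wr_size_le a B.
Proof.
  intros HgL HgQ [[f [sf Hsf]] q]. unfold wr_size_le, cursor, lamp; simpl.
  destruct (generates_word_dist_le SQ HgQ q) as [M HM].
  destruct (uniform_nat_bound (fun p n => word_dist_le SQ gone p n) sf) as [K HK];
    [intros; eapply word_dist_le_mono; eauto | intros; apply generates_word_dist_le; auto|].
  destruct (uniform_nat_bound (fun p n => word_dist_le SL gone (f p) n) sf) as [A HA];
    [intros; eapply word_dist_le_mono; eauto | intros; apply generates_word_dist_le; auto|].
  exists (M + K + A)%nat. split; [|split].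
  - eapply word_dist_le_mono; eauto; lia.
  - intros p Hp. destruct (classic (In p sf)) as [Hi | Hi].
    + eapply word_dist_le_mono; [apply HK, Hi | lia].
    + exfalso; apply Hp, Hsf, Hi.
  - intros p. destruct (classic (In p sf)) as [Hi | Hi].
    + eapply word_dist_le_mono; [apply HA, Hi | lia].
    + rewrite (Hsf p Hi). apply word_dist_le_refl.
Qed.

Lemma wr_size_le_letters : generates SL -> generates SQ ->
  forall S : list (wreath L Q),
  exists B, (1 <= B)%nat /\ forall a, is_letter S a -> wr_size_le a B.
Proof.
  intros HgL HgQ S.
  destruct (uniform_nat_bound wr_size_le (S ++ map ginv S)) as [B HB];
    [intros; eapply wr_size_le_mono; eauto | intros; apply wr_size_le_exists; auto|].
  exists (Datatypes.S B). split; [lia|].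
  intros a [s [Hs [-> | ->]]]; (eapply wr_size_le_mono; [apply HB | lia]);
    apply in_or_app; [left | right; apply in_map]; auto.
Qed.

Section Words.
Variables (S : list (wreath L Q)) (B : nat).
Hypothesis HB : forall a, is_letter S a -> wr_size_le a B.

Lemma wr_size_le_prod_list w :
  Forall (is_letter S) w -> wr_size_le (prod_list w) (B * length w).
Proof.
  induction w as [|a w IH]; intros Hw; simpl.
  - rewrite Nat.mul_0_r. apply wr_size_le_1.
  - inversion Hw; subst. rewrite Nat.mul_succ_r, Nat.add_comm.
    apply wr_size_le_mul; auto.
Qed.

Lemma word_dist_le_wr_size_le x y m :
  word_dist_le S x y m -> exists z, y = gmul x z /\ wr_size_le z (B * m).
Proof.
  intros [w [Hl [Hw <-]]]. exists (prod_list w). split; auto.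
  eapply wr_size_le_mono; [apply wr_size_le_prod_list, Hw | nia].
Qed.

End Words.
End Wreath.

Section Pieces.
Context {L Q : Group}.
Variables (SL : list L) (SQ : list Q) (S : list (wreath L Q)) (B : nat).
Hypothesis HB : forall a, is_letter S a -> wr_size_le SL SQ a B.
Context {J : Type}.
Variables (P : nat -> J -> Q -> Prop) (s : nat).

Definition near_piece (i : nat) (j : J) (p : Q) : Prop :=
  exists u, P i j u /\ word_dist_le SQ u p (B * s).

(* [h] is normalised to [gone] near [P i j], so two pieces with the same [j]
   differ at a lamp far from [P i j]. *)
Definition wr_piece (i : nat) (jh : J * (Q -> L)) (x : wreath L Q) : Prop :=
  P i (fst jh) (cursor x) /\
  forall p, (~ near_piece i (fst jh) p -> lamp x p = snd jh p) /\
            (near_piece i (fst jh) p -> snd jh p = gone).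

Lemma wr_pieces_cover d : covers P d -> covers wr_piece d.
Proof.
  intros Hcov x. destruct (Hcov (cursor x)) as [i [j [Hi Hx]]].
  exists i, (j, fun p => if excluded_middle_informative (near_piece i j p)
                         then gone else lamp x p).
  split; [exact Hi|]. split; [exact Hx|]. intros p; simpl.
  destruct (excluded_middle_informative (near_piece i j p)); tauto.
Qed.

Lemma wr_pieces_disjoint i : (1 <= B)%nat ->
  r_disjoint SQ (P i) (INR (B * s)) -> r_disjoint S (wr_piece i) (INR s).
Proof.
  intros HB1 Hdisj [j h] [j' h'] Hne x y [Px Hx] [Py Hy]; simpl in *.
  destruct (classic (j = j')) as [<- | Hj].
  - assert (Hh : exists p, h p <> h' p).
    { apply NNPP; intros Hno; apply Hne; f_equal. apply functional_extensionality.
      intros p; apply NNPP; intros E; apply Hno; exists p; exact E. }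
    destruct Hh as [p Hp].
    assert (Hfar : ~ near_piece i j p).
    { intros Hn; apply Hp; rewrite (proj2 (Hx p) Hn), (proj2 (Hy p) Hn); reflexivity. }
    assert (Hlamp : lamp y p <> lamp x p).
    { rewrite (proj1 (Hx p) Hfar), (proj1 (Hy p) Hfar); auto. }
    split; [intros <-; contradiction|].
    intros m Hm. apply le_INR.
    destruct (word_dist_le_wr_size_le SL SQ S B HB x y m Hm) as [z [-> Hz]].
    destruct (Compare_dec.le_lt_dec s m) as [Hsm | Hms]; [exact Hsm|].
    exfalso; apply Hfar. exists (cursor x); split; [exact Px|].
    eapply word_dist_le_mono; [apply (lamp_mul_changed_near SL SQ x z _ Hz p Hlamp) | nia].
  - destruct (Hdisj j j' Hj (cursor x) (cursor y) Px Py) as [Hc Hd].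
    split; [intros <-; contradiction|].
    intros m Hm. apply le_INR.
    destruct (word_dist_le_wr_size_le SL SQ S B HB x y m Hm) as [z [-> Hz]].
    specialize (Hd _ (cursor_mul_dist SL SQ x z _ Hz)). apply INR_le in Hd. nia.
Qed.

Lemma wr_piece_growth i D :
  (forall j u v, P i j u -> P i j v -> word_dist_le SQ u v D) ->
  forall jh x rho, wr_piece i jh x -> 0 <= rho ->
  card_le (fun y => wr_piece i jh y /\ dist_leR S x y rho)
    (INR (length (ball SQ D)) * growth_bound SL B (length (ball SQ (D + B * s))) rho).
Proof.
  intros HD [j h] x rho [Px Hx] Hrho; simpl in *.
  destruct (ceilN_spec rho Hrho) as [Ht _]. set (t := ceilN rho) in *.
  destruct (ball_card_spec SL (B * t)) as [[bl [Hbl Hcov]] _].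
  set (near := map (gmul (cursor x)) (ball SQ (D + B * s))).
  set (cursors := map (gmul (cursor x)) (ball SQ D)).
  set (lamps := list_choices (map (fun p => map (gmul (lamp x p)) bl) near)).
  apply card_le_weaken with (INR (length (list_prod cursors lamps))).
  - apply (card_le_inj _ (fun y => (cursor y, map (lamp y) near))); [exact (inhabits x) | |].
    + intros y [[Py Hy] [m [Hm Hmr]]]. apply in_prod.
      * apply In_ball, (HD j); assumption.
      * apply In_list_choices. intros p _.
        destruct (word_dist_le_wr_size_le SL SQ S B HB x y m Hm) as [z [-> Hz]].
        destruct (word_dist_le_to_1 _ _ _ _ (lamp_mul_dist SL SQ x z _ Hz p)) as [w [Hw ->]].
        apply in_map, Hcov. eapply word_dist_le_mono; [exact Hw|].
        apply Nat.mul_le_mono_l, INR_le; lra.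
    + intros y z [[Py Hy] _] [[Pz Hz] _] E. injection E as Ec El.
      apply wreath_ext; [exact Ec|]. intros p.
      destruct (classic (near_piece i j p)) as [[u [Pu Hu]] | Hn].
      * apply (proj1 map_ext_in_iff El). apply In_ball.
        eapply word_dist_le_trans; [apply (HD j _ _ Px Pu) | exact Hu].
      * rewrite (proj1 (Hy p) Hn), (proj1 (Hz p) Hn); reflexivity.
  - unfold lamps. rewrite length_prod, (length_list_choices _ (ball_card SL (B * t))).
    + unfold growth_bound, cursors, near. fold t.
      rewrite mult_INR, pow_INR, !length_map. lra.
    + intros l Hl. apply in_map_iff in Hl. destruct Hl as [p [<- _]].
      rewrite length_map; exact Hbl.
Qed.

End Pieces.

Theorem corollary1p8 (L Q : Group) (SL : list L) (SQ : list Q) (n : nat) :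
  generates SL -> subexp_growth SL ->
  generates SQ -> asdim_le SQ n ->
  forall S : list (wreath L Q), generates S -> asdim_se_le S n.
Proof.
  (* [S] need not generate: only the displacement caused by its letters matters. *)
  intros HgL HsubL HgQ HasQ S _ r Hr.
  destruct (wr_size_le_letters SL SQ HgL HgQ S) as [B [HB1 HB]].
  set (s := ceilN r). destruct (ceilN_spec r Hr) as [Hrs _].
  destruct (HasQ (INR (B * s)) (pos_INR _)) as [J [P [Hcov [Hdisj [D HD]]]]].
  exists (J * (Q -> L))%type, (wr_piece SQ B P s). split; [|split].
  - apply wr_pieces_cover, Hcov.
  - intros i Hi. apply r_disjoint_mono with (INR s); [exact Hrs|].
    apply (wr_pieces_disjoint SL SQ S B HB); auto.
  - set (V := growth_bound SL B (length (ball SQ (D + B * s)))).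
    set (a := INR (length (ball SQ D))).
    exists V, (a + 1). split; [|split].
    + apply growth_bound_subexponential; assumption.
    + apply growth_bound_nondecreasing.
    + intros i jh x rho Hi Hx Hrho.
      eapply card_le_weaken; [apply (wr_piece_growth SL SQ S B HB P s i D); eauto|].
      assert (0 <= a) by apply pos_INR.
      assert (0 <= V rho) by apply growth_bound_nonneg.
      assert (V rho <= V ((a + 1) * rho)) by (apply growth_bound_nondecreasing; nra).
      fold a V. nra.
Qed.
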